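(* Let $\beta>0$ and $M\ge1$. Every solution $\mathbf{p}\in\mathbb{R}^M$ of the system $$\mathbf{p}=\big\langle \mathbf{s}\,\tanh(\beta\,\mathbf{s}\cdot\mathbf{p})\big\rangle_{\mathbf{s}}$$ has all components equal: $p^\mu=p^\nu$ for all $\mu,\nu\in\{1,\dots,M\}$.
   Context: $m_0(\beta):=\lim_{h\to0^+}m_0(\beta,h)$, where $m_0(\beta,h)$ is the unique solution of $m=\tanh(\beta m+h)$ for $h>0$; equivalently $m_0(\beta)$ is the largest nonnegative solution of $m=\tanh(\beta m)$ (so $m_0(\beta)=0$ for $\beta\le1$ and $m_0(\beta)>0$ for $\beta>1$). $\langle\cdot\rangle_{\mathbf{s}}$ denotes expectation over $\mathbf{s}\in\{-1,1\}^M$ with i.i.d. entries of mean $m_0(\beta)$, i.e. weight $e^{\beta m_0\sum_\mu s_\mu}/(2\cosh(\beta m_0))^M$. *)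

From HB Require Import structures.
From mathcomp Require Import all_boot all_order all_algebra.
From mathcomp Require Import all_classical all_reals all_analysis.
Set Implicit Arguments. Unset Strict Implicit. Unset Printing Implicit Defensive.
Import Order.TTheory GRing.Theory Num.Theory.
Local Open Scope classical_set_scope.
Local Open Scope ring_scope.

Definition coshR {R : realType} (x : R) : R := (expR x + expR (- x)) / 2.
Definition tanhR {R : realType} (x : R) : R :=
  (expR x - expR (- x)) / (expR x + expR (- x)).

(* m_0(beta): largest nonnegative solution of m = tanh(beta m)
   (the solution set is nonempty (contains 0), closed and bounded by 1,
   so its supremum is its maximum). *)
Definition m0 {R : realType} (beta : R) : R :=
  sup [set m : R | 0 <= m /\ m = tanhR (beta * m)].

Definition spin {M : nat} (s : {ffun 'I_M -> bool}) (mu : 'I_M) {R : realType} : R :=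
  if s mu then 1 else -1.

(* < f(s) >_s : expectation over i.i.d. spins of mean m0(beta), with weight
   exp(beta m0 sum_mu s_mu) / (2 cosh(beta m0))^M *)
Definition avg_s {R : realType} (beta : R) (M : nat)
  (f : {ffun 'I_M -> bool} -> R) : R :=
  \sum_(s : {ffun 'I_M -> bool})
     expR (beta * m0 beta * \sum_(mu < M) spin s mu) /
       (2 * coshR (beta * m0 beta)) ^+ M * f s.

From HB Require Import structures.
From mathcomp Require Import all_boot all_order all_algebra.
From mathcomp Require Import all_classical all_reals all_analysis.
From mathcomp Require Import lra ring perm.
Import Order.TTheory GRing.Theory Num.Theory.
Import numFieldNormedType.Exports.
Local Open Scope classical_set_scope.
Local Open Scope ring_scope.

(* Fix mu <> nu, let d = p_mu - p_nu and let swap exchange the spins at mu and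
   nu.  The Gibbs weights are swap-invariant, so averaging the equations for
   p_mu - p_nu and for its swapped copy gives
     2 d = < (s_mu - s_nu) (tanh (beta h(s)) - tanh (beta h(swap s))) >,
   where h(s) - h(swap s) = (s_mu - s_nu) d.  Bounding each term by the
   elementary inequality e (tanh (x + e) - tanh (x - e)) <= 2 |e| tanh |e|, and
   computing < (s_mu - s_nu)^2 > = 2 (1 - tanh^2 (beta m0)), yields
     |d| <= (1 - tanh^2 (beta m0)) tanh (beta |d|).
   Finally beta (1 - tanh^2 (beta m0)) <= 1 (using, for beta > 1, a positive
   fixed point m <= m0 of m = tanh (beta m) and the inequality
   x (1 - tanh^2 x) <= tanh x) together with tanh y < y makes the right-hand
   side strictly smaller than |d| unless d = 0. *)

Section Hyperbolic.
Context {R : realType}.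
Implicit Types a b e x y : R.

Definition sinhR x : R := (expR x - expR (- x)) / 2.

Lemma coshR_gt0 x : 0 < coshR x.
Proof. by rewrite /coshR divr_gt0 // addr_gt0 // expR_gt0. Qed.

Lemma tanhR_sinh_cosh x : tanhR x = sinhR x / coshR x.
Proof.
rewrite /tanhR /sinhR /coshR.
have h : expR x + expR (- x) != 0 by rewrite gt_eqF // addr_gt0 // expR_gt0.
by field; rewrite h.
Qed.

Lemma cosh2_sub_sinh2 x : coshR x ^+ 2 - sinhR x ^+ 2 = 1.
Proof.
rewrite /coshR /sinhR expRN.
have h : expR x != 0 by rewrite gt_eqF // expR_gt0.
by field; rewrite h.
Qed.

Lemma sinhR_double x : sinhR (2 * x) = 2 * sinhR x * coshR x.
Proof.
have -> : 2 * x = x + x by ring.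
rewrite /coshR /sinhR !expRN expRD.
have h : expR x != 0 by rewrite gt_eqF // expR_gt0.
by field; rewrite h.
Qed.

Lemma is_derive_expRN x : is_derive x 1 (fun y : R => expR (- y)) (- expR (- x)).
Proof.
have := @is_derive1_comp R expR -%R x _ _ (is_derive_expR (- x)) (is_deriveNid x 1).
by move=> h; apply: is_derive_eq h _; rewrite mulrN1.
Qed.

Lemma is_derive_cosh x : is_derive x 1 coshR (sinhR x).
Proof.
have h := is_deriveZ (2^-1) (is_deriveD (is_derive_expR x) (is_derive_expRN x)).
have -> : coshR = (2^-1 : R) *: (expR + (fun y : R => expR (- y))).
  by apply/funext => y; rewrite /coshR /= mulrC.
by apply: is_derive_eq h _; rewrite /sinhR /= mulrC.
Qed.

Lemma is_derive_sinh x : is_derive x 1 sinhR (coshR x).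
Proof.
have h := is_deriveZ (2^-1) (is_deriveB (is_derive_expR x) (is_derive_expRN x)).
have -> : sinhR = (2^-1 : R) *: (expR - (fun y : R => expR (- y))).
  by apply/funext => y; rewrite /sinhR /= mulrC.
by apply: is_derive_eq h _; rewrite /coshR /= opprK mulrC.
Qed.

Lemma pos_derive_incr (g g' : R -> R) :
  (forall x, is_derive x (1:R) g (g' x)) -> (forall x, 0 < x -> 0 < g' x) ->
  forall x, 0 < x -> g 0 < g x.
Proof.
move=> dg g'pos x x0.
have gc : {within `[0, x], continuous g}.
  apply: continuous_subspaceT => y.
  exact/differentiable_continuous/derivable1_diffP; exact: ex_derive (dg y).
have [c c0x] := MVT x0 (fun y _ => dg y) gc.
rewrite subr0 -subr_gt0 => ->; apply: mulr_gt0 => //.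
by apply: g'pos; move: c0x; rewrite in_itv /= => /andP[].
Qed.

Lemma coshR_gt1 {x} : 0 < x -> 1 < coshR x.
Proof.
move=> x0; rewrite /coshR expRN ltr_pdivlMr // mul1r.
have E1 : 1 < expR x by rewrite expR_gt1.
have E0 : expR x != 0 by rewrite gt_eqF // expR_gt0.
rewrite -(ltr_pM2r (expR_gt0 x)) [ltRHS]mulrDl mulVf //.
nra.
Qed.

(* x < sinh x on ]0, +oo[, since (sinh - id)' = cosh - 1 > 0 there. *)
Lemma lt_sinhR {x} : 0 < x -> x < sinhR x.
Proof.
move=> x0; rewrite -subr_gt0.
apply: le_lt_trans (@pos_derive_incr (fun y => sinhR y - y) (fun y => coshR y - 1) _ _ x x0).
- by rewrite /sinhR oppr0 expR0 !subrr mul0r.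
- by move=> y; exact: is_deriveB (is_derive_sinh y) (is_derive_id y 1).
- by move=> y y0; rewrite subr_gt0 coshR_gt1.
Qed.

(* sinh y < y cosh y on ]0, +oo[, since (y cosh y - sinh y)' = y sinh y > 0. *)
Lemma sinhR_lt_mul_cosh {y} : 0 < y -> sinhR y < y * coshR y.
Proof.
move=> y0; rewrite -subr_gt0.
apply: le_lt_trans (@pos_derive_incr (fun x => x * coshR x - sinhR x) (fun x => x * sinhR x) _ _ y y0).
- by rewrite mul0r /sinhR oppr0 expR0 subrr mul0r subrr.
- move=> x.
  have := is_deriveB (is_deriveM (is_derive_id x 1) (is_derive_cosh x)) (is_derive_sinh x).
  by move/is_derive_eq; apply; rewrite -[_ *: _]/(_ * _) -[_%:A]/(_ * 1) mulr1 addrK.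
- by move=> x x0; rewrite mulr_gt0 // (lt_trans x0) // lt_sinhR.
Qed.

(* tanh in terms of w = exp (2 x), convenient for algebraic inequalities *)
Lemma tanhR_expR2 x : tanhR x = (expR (2 * x) - 1) / (expR (2 * x) + 1).
Proof.
have -> : 2 * x = x + x by ring.
rewrite /tanhR expRN expRD.
have E0 : expR x != 0 by rewrite gt_eqF // expR_gt0.
have D1 : expR x * expR x + 1 != 0 by rewrite gt_eqF // addr_gt0 // mulr_gt0 // expR_gt0.
have D2 : expR x + (expR x)^-1 != 0 by rewrite gt_eqF // addr_gt0 ?invr_gt0 // expR_gt0.
by field; rewrite ?E0 ?D1 ?D2.
Qed.

Lemma tanhR0 : tanhR 0 = 0 :> R.
Proof. by rewrite /tanhR oppr0 subrr mul0r. Qed.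

Lemma tanhR_lt1 x : tanhR x < 1.
Proof.
rewrite tanhR_expR2; have w0 := expR_gt0 (2 * x).
by rewrite ltr_pdivrMr ?mul1r; lra.
Qed.

Lemma tanhR_ge0 {x} : 0 <= x -> 0 <= tanhR x.
Proof.
move=> x0; rewrite tanhR_expR2.
have w1 : 1 <= expR (2 * x) by have := expR_ge1Dx (2 * x); lra.
by apply: divr_ge0; lra.
Qed.

Lemma tanhR_le x y : x <= y -> tanhR x <= tanhR y.
Proof.
move=> xy; rewrite !tanhR_expR2.
have w0 := expR_gt0 (2 * x); have v0 := expR_gt0 (2 * y).
have wv : expR (2 * x) <= expR (2 * y) by rewrite ler_expR; lra.
set w := expR (2 * x) in w0 wv *; set v := expR (2 * y) in v0 wv *.
rewrite ler_pdivrMr ?addr_gt0 // mulrAC ler_pdivlMr ?addr_gt0 //.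
nra.
Qed.

Lemma tanhR_lt_id {y} : 0 < y -> tanhR y < y.
Proof.
move=> y0; rewrite tanhR_sinh_cosh ltr_pdivrMr ?coshR_gt0 //.
exact: sinhR_lt_mul_cosh.
Qed.

(* lower bound used to locate a positive fixed point of m |-> tanh (b m) *)
Lemma tanhR_ge_ratio {y} : 0 <= y -> y / (1 + y) <= tanhR y.
Proof.
move=> y0; rewrite tanhR_expR2.
have w := expR_ge1Dx (2 * y); have w0 := expR_gt0 (2 * y).
set e := expR (2 * y) in w w0 *.
rewrite ler_pdivrMr; last lra.
rewrite mulrAC ler_pdivlMr; last lra.
nra.
Qed.

(* x (1 - tanh^2 x) <= tanh x, i.e. x <= sinh x cosh x = sinh (2 x) / 2 *)
Lemma mul_sech2_le_tanhR {a} : 0 < a -> a * (1 - tanhR a ^+ 2) <= tanhR a.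
Proof.
move=> a0; have c0 := coshR_gt0 a.
have -> : 1 - tanhR a ^+ 2 = (coshR a ^+ 2 - sinhR a ^+ 2) / coshR a ^+ 2.
  by rewrite tanhR_sinh_cosh; field; rewrite gt_eqF.
rewrite cosh2_sub_sinh2 mul1r.
rewrite tanhR_sinh_cosh ler_pdivlMr // mulrAC ler_pdivrMr ?exprn_gt0 //.
have := lt_sinhR (mulr_gt0 (ltr0Sn _ 1) a0); rewrite sinhR_double => /ltW.
move=> h; rewrite expr2 [leRHS]mulrA; nra.
Qed.

(* tanh (x + e) - tanh (x - e) <= 2 tanh e for e >= 0: the increment of tanh
   over an interval of length 2 e is largest when the interval is centred at 0 *)
Lemma tanhR_gap x e : 0 <= e -> tanhR (x + e) - tanhR (x - e) <= 2 * tanhR e.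
Proof.
move=> e0; rewrite !tanhR_expR2.
have -> : 2 * (x + e) = 2 * (x - e) + 2 * e + 2 * e by ring.
rewrite !expRD.
have S0 := expR_gt0 (2 * (x - e)).
have Q1 : 1 <= expR (2 * e) by have := expR_ge1Dx (2 * e); lra.
set S := expR (2 * (x - e)) in S0 *; set Q := expR (2 * e) in Q1 *.
have d1 : S * Q * Q + 1 != 0 by rewrite gt_eqF //; nra.
have d2 : S + 1 != 0 by rewrite gt_eqF //; nra.
have d3 : Q + 1 != 0 by rewrite gt_eqF //; nra.
have -> : (S * Q * Q - 1) / (S * Q * Q + 1) - (S - 1) / (S + 1) =
  2 * S * (Q * Q - 1) / ((S * Q * Q + 1) * (S + 1)) by field; rewrite d1 d2.
rewrite ler_pdivrMr; last by nra.
rewrite (_ : 2 * ((Q - 1) / (Q + 1)) * ((S * Q * Q + 1) * (S + 1)) =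
   (2 * (Q - 1) * ((S * Q * Q + 1) * (S + 1))) / (Q + 1)); last by field.
rewrite ler_pdivlMr; last by lra.
have Q1' : 0 <= Q - 1 by rewrite subr_ge0.
have := mulr_ge0 Q1' (sqr_ge0 (S * Q - 1)).
by rewrite expr2; nra.
Qed.

Lemma tanhR_pair x e : e * (tanhR (x + e) - tanhR (x - e)) <= 2 * `|e| * tanhR `|e|.
Proof.
have [e0|e0] := leP 0 e.
  by rewrite ger0_norm // -mulrA mulrCA; apply: ler_wpM2l => //; exact: tanhR_gap.
have e0' : 0 <= - e by rewrite oppr_ge0 ltW.
have -> : e * (tanhR (x + e) - tanhR (x - e)) = - e * (tanhR (x - e) - tanhR (x + e)).
  by ring.
rewrite ltr0_norm // -mulrA mulrCA; apply: ler_wpM2l => //.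
by have := @tanhR_gap x (- e) e0'; rewrite opprK.
Qed.

Lemma continuous_tanhR_scale b : continuous (fun z : R => tanhR (b * z)).
Proof.
have cexp (c : R) : continuous (fun z : R => expR (c * z)).
  move=> y; apply: (@continuous_comp _ _ _ (fun z : R => c * z) expR).
    by apply: cvgM; [exact: cvg_cst | exact: cvg_id].
  exact: continuous_expR.
move=> x; have -> : (fun z : R => tanhR (b * z)) =
    (fun y => (expR ((2 * b) * y) - 1) * (expR ((2 * b) * y) + 1)^-1).
  by apply/funext => y; rewrite tanhR_expR2 mulrA.
apply: cvgM; first by apply: cvgB; [exact: cexp | exact: cvg_cst].
apply: cvgV; first by rewrite gt_eqF // addr_gt0 // expR_gt0.
by apply: cvgD; [exact: cexp | exact: cvg_cst].
Qed.

End Hyperbolic.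

Section Magnetization.
Context {R : realType}.
Implicit Types b d m : R.

Lemma m0_ub b m : 0 <= m -> m = tanhR (b * m) -> m <= m0 b.
Proof.
move=> m_ge0 m_fix; apply: ub_le_sup; last by [].
by exists 1 => y [_ ->]; exact/ltW/tanhR_lt1.
Qed.

Lemma m0_ge0 b : 0 <= m0 b.
Proof. by apply: m0_ub; rewrite // mulr0 tanhR0. Qed.

(* for b > 1, the intermediate value theorem on [(b - 1) / b, 1] gives a
   positive fixed point *)
Lemma positive_fixed_point {b} : 1 < b -> exists2 m, 0 < m & m = tanhR (b * m).
Proof.
move=> b1; have b0 : 0 < b by lra.
pose f m := tanhR (b * m) - m.
pose eps := (b - 1) / b.
have eps0 : 0 < eps by apply: divr_gt0; lra.
have eps1 : eps <= 1 by rewrite ler_pdivrMr //; lra.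
have f_eps : 0 <= f eps.
  have beps : b * eps = b - 1 by rewrite /eps; field; rewrite gt_eqF.
  rewrite /f subr_ge0 (le_trans _ (tanhR_ge_ratio (ltW (mulr_gt0 b0 eps0)))) //.
  by rewrite beps (_ : 1 + (b - 1) = b) ?subrKC // /eps.
have f_1 : f 1 <= 0 by rewrite /f subr_le0 ltW // tanhR_lt1.
have fc : {within `[eps, 1], continuous f}.
  apply: continuous_subspaceT => x.
  by apply: cvgB; [exact: continuous_tanhR_scale | exact: cvg_id].
have [c ci fc0] : exists2 c, c \in `[eps, 1] & f c = 0.
  by apply: IVT => //; rewrite ge_min le_max f_1 f_eps orbT.
exists c; first by move: ci; rewrite in_itv /= => /andP[/(lt_le_trans eps0)].
by apply/eqP; rewrite eq_sym -subr_eq0 -fc0.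
Qed.

(* the effective susceptibility b (1 - tanh^2 (b m0 b)) is at most 1: trivial
   for b <= 1; for b > 1 compare with a positive fixed point m <= m0 b and use
   b m (1 - m^2) <= tanh (b m) = m *)
Lemma susceptibility_le1 {b} : 0 < b -> b * (1 - tanhR (b * m0 b) ^+ 2) <= 1.
Proof.
move=> b0; have [b1|b1] := leP b 1.
  by have := sqr_ge0 (tanhR (b * m0 b)); nra.
have [m m0_gt0 m_fix] := positive_fixed_point b1.
have m_le_t : m <= tanhR (b * m0 b).
  by rewrite {1}m_fix tanhR_le // ler_pM2l // m0_ub // ltW.
have m_lt1 : m < 1 by rewrite m_fix tanhR_lt1.
have key := mul_sech2_le_tanhR (mulr_gt0 b0 m0_gt0); rewrite -m_fix in key.
have bm_le1 : b * (1 - m ^+ 2) <= 1.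
  by rewrite -(ler_pM2l m0_gt0) mulr1 mulrA [m * b]mulrC.
apply: le_trans bm_le1; rewrite ler_pM2l // lerD2l lerN2.
by rewrite ler_sqr ?nnegrE // (le_trans (ltW m0_gt0)).
Qed.

(* no positive d satisfies d <= (1 - tanh^2 (b m0 b)) tanh (b d), since
   tanh (b d) < b d and b (1 - tanh^2 (b m0 b)) <= 1 *)
Lemma gap_contraction {b d} : 0 < b -> 0 < d ->
  (1 - tanhR (b * m0 b) ^+ 2) * tanhR (b * d) < d.
Proof.
move=> b0 d0; set t := tanhR (b * m0 b).
have t_ge0 : 0 <= t by rewrite tanhR_ge0 // mulr_ge0 ?m0_ge0 ?ltW.
have t_lt1 : t < 1 by exact: tanhR_lt1.
have chi_gt0 : 0 < 1 - t ^+ 2 by rewrite subr_gt0 expr_lt1.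
apply: lt_le_trans (_ : (1 - t ^+ 2) * (b * d) <= d).
  by rewrite ltr_pM2l // tanhR_lt_id // mulr_gt0.
rewrite mulrA [_ * b]mulrC -[leRHS]mul1r.
by rewrite ler_pM2r // susceptibility_le1.
Qed.
End Magnetization.

Lemma sum_ffun_prod {R : comPzRingType} {I : finType} (g : I -> bool -> R) :
  \sum_(s : {ffun I -> bool}) \prod_i g i (s i) = \prod_i (g i true + g i false).
Proof. by rewrite -bigA_distr_bigA; apply: eq_bigr => i _; rewrite big_bool. Qed.

Section GibbsMeasure.
Context {R : realType} {M : nat}.
Implicit Types (a : R) (s : {ffun 'I_M -> bool}).

Definition spinb (x : bool) : R := if x then 1 else -1.

(* weights of the average: avg_s beta M f = sum_s gibbs (beta * m0 beta) s * f s *)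
Definition gibbs a s : R :=
  expR (a * \sum_(k < M) spin s k) / (2 * coshR a) ^+ M.

Definition site_weight a (x : bool) : R := expR (a * spinb x) / (2 * coshR a).

Lemma gibbs_prod a s : gibbs a s = \prod_k site_weight a (s k).
Proof. by rewrite /gibbs mulr_sumr expR_sum prodf_div prodr_const card_ord. Qed.

Lemma gibbs_ge0 a s : 0 <= gibbs a s.
Proof. by rewrite divr_ge0 ?expR_ge0 // exprn_ge0 // mulr_ge0 // ltW // coshR_gt0. Qed.

Lemma site_weight_sum a : site_weight a true + site_weight a false = 1.
Proof.
rewrite /site_weight /spinb /coshR mulr1 mulrN1.
have h : expR a + expR (- a) != 0 by rewrite gt_eqF // addr_gt0 // expR_gt0.
by field.
Qed.

Lemma site_weight_diff a : site_weight a true - site_weight a false = tanhR a.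
Proof.
rewrite /site_weight /spinb /coshR /tanhR mulr1 mulrN1.
have h : expR a + expR (- a) != 0 by rewrite gt_eqF // addr_gt0 // expR_gt0.
by field.
Qed.

Lemma gibbs_total a : \sum_s gibbs a s = 1.
Proof.
under eq_bigr do rewrite gibbs_prod.
by rewrite (sum_ffun_prod (fun _ => site_weight a)) big1 // => k _; exact: site_weight_sum.
Qed.

(* distinct spins are independent with mean tanh a *)
Lemma gibbs_spin_corr a (mu nu : 'I_M) : mu != nu ->
  \sum_s gibbs a s * (spin s mu * spin s nu) = tanhR a ^+ 2.
Proof.
move=> mn.
pose sel k := (k == mu) || (k == nu).
pose g k x := site_weight a x * (if sel k then spinb x else 1).
have prod2 (h : 'I_M -> R) : (forall k, ~~ sel k -> h k = 1) ->
    \prod_k h k = h mu * h nu.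
  move=> h1; rewrite (bigD1 mu) //= (bigD1 nu) 1?eq_sym //= big1 ?mulr1 ?mulrA //.
  by move=> k /andP[kn km]; apply: h1; rewrite /sel negb_or km kn.
have sel_mu : sel mu by rewrite /sel eqxx.
have sel_nu : sel nu by rewrite /sel eqxx orbT.
transitivity (\sum_(s : {ffun 'I_M -> bool}) \prod_k g k (s k)).
  apply: eq_bigr => s _; rewrite gibbs_prod /g [RHS]big_split /=; congr (_ * _).
  by rewrite prod2 ?sel_mu ?sel_nu // => k /negbTE ->.
rewrite sum_ffun_prod prod2; last first.
  by move=> k /negbTE nsel; rewrite /g nsel !mulr1 site_weight_sum.
by rewrite /g sel_mu sel_nu /spinb !mulr1 !mulrN1 site_weight_diff expr2.
Qed.

Lemma gibbs_spin_gap a (mu nu : 'I_M) : mu != nu ->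
  \sum_s gibbs a s * (spin s mu - spin s nu) ^+ 2 = 2 * (1 - tanhR a ^+ 2).
Proof.
move=> mn; have spin2 s k : spin s k ^+ 2 = 1 :> R.
  by rewrite /spin; case: (s k); rewrite ?sqrrN expr1n.
transitivity (2 * \sum_s gibbs a s - 2 * \sum_s gibbs a s * (spin s mu * spin s nu)).
  rewrite !mulr_sumr -sumrB; apply: eq_bigr => s _.
  by rewrite sqrrB !spin2; ring.
by rewrite gibbs_total gibbs_spin_corr //; ring.
Qed.
End GibbsMeasure.

Section Swap.
Context {R : realType} {M : nat} (mu nu : 'I_M).
Implicit Types (a : R) (p : 'I_M -> R) (s : {ffun 'I_M -> bool}).

Definition swap s : {ffun 'I_M -> bool} := [ffun k => s (tperm mu nu k)].

Lemma swapK : involutive swap.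
Proof. by move=> s; apply/ffunP => k; rewrite !ffunE tpermK. Qed.

Lemma spin_swap s k : spin (swap s) k = spin s (tperm mu nu k) :> R.
Proof. by rewrite /spin ffunE. Qed.

Lemma sum_spin_swap (c : 'I_M -> R) s :
  \sum_k spin (swap s) k * c k = \sum_k spin s k * c (tperm mu nu k).
Proof.
rewrite (reindex_inj (@perm_inj _ (tperm mu nu))) /=.
by apply: eq_bigr => k _; rewrite spin_swap tpermK.
Qed.

Lemma gibbs_swap a s : gibbs a (swap s) = gibbs a s.
Proof.
rewrite /gibbs; congr (expR (a * _) / _).
by have := sum_spin_swap (fun=> 1) s; rewrite !(eq_bigr _ (fun k _ => mulr1 _)).
Qed.

Definition local_field p s : R := \sum_(k < M) spin s k * p k.

Lemma local_field_swap p s : mu != nu ->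
  local_field p s - local_field p (swap s) = (spin s mu - spin s nu) * (p mu - p nu).
Proof.
move=> mn; rewrite /local_field sum_spin_swap -sumrB.
rewrite (bigD1 mu) //= (bigD1 nu) 1?eq_sym //= big1 ?addr0.
  by rewrite tpermL tpermR; ring.
by move=> k /andP[kn km]; rewrite tpermD 1?eq_sym // subrr.
Qed.

(* bound on one term of the swapped sum: for sigma = s_mu - s_nu in {0, 2, -2}
   and e = sigma b d / 2 we have |e| = b |d|, and the left side is
   2 e (tanh (c - e + e) - tanh (c - e - e)) <= 4 |e| tanh |e| *)
Lemma spin_gap_term b d c s : 0 < b ->
  (spin s mu - spin s nu : R) * b * d * (tanhR c - tanhR (c - (spin s mu - spin s nu) * b * d))
    <= (spin s mu - spin s nu) ^+ 2 * (b * `|d| * tanhR (b * `|d|)).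
Proof.
move=> b0; set sigma : R := spin s mu - spin s nu.
have [->|sigma2] : sigma = 0 \/ `|sigma| = 2.
- rewrite {}/sigma /spin; case: (s mu); case: (s nu); rewrite ?subrr; [left|right|right|left] => //.
    by rewrite (_ : 1 - -1 = 2) ?ger0_norm //; ring.
  by rewrite (_ : -1 - 1 = -2) ?normrN ?ger0_norm //; ring.
- by rewrite !mul0r expr0n mul0r.
pose e := sigma * b * d / 2.
have e_norm : `|e| = b * `|d|.
  by rewrite /e !normrM sigma2 (gtr0_norm b0) normfV (@ger0_norm _ 2) //; field.
have := tanhR_pair (c - e) e; rewrite subrK e_norm.
have -> : c - e - e = c - sigma * b * d by rewrite /e; field.
have -> : sigma ^+ 2 = 4 by rewrite -real_normK ?num_real // sigma2; ring.
have -> : sigma * b * d = 2 * e by rewrite /e; field.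
by lra.
Qed.

Section SelfConsistency.
Context {a beta : R} {p : 'I_M -> R}.
Hypothesis p_fix :
  forall k, p k = \sum_s gibbs a s * (spin s k * tanhR (beta * local_field p s)).

(* writing p_mu - p_nu as an average, once directly and once after the change
   of variables s |-> swap s, and adding the two expressions *)
Lemma gap_identity :
  2 * (p mu - p nu) = \sum_s gibbs a s * ((spin s mu - spin s nu) *
     (tanhR (beta * local_field p s) - tanhR (beta * local_field p (swap s)))).
Proof.
pose T s := tanhR (beta * local_field p s).
have gap : p mu - p nu = \sum_s gibbs a s * ((spin s mu - spin s nu) * T s).
  by rewrite (p_fix mu) (p_fix nu) -sumrB; apply: eq_bigr => s _; rewrite /T; ring.
have gap_swapped :
    p mu - p nu = \sum_s gibbs a s * ((spin s nu - spin s mu) * T (swap s)).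
  rewrite {1}gap (reindex_inj (inv_inj swapK)) /=; apply: eq_bigr => s _.
  by rewrite gibbs_swap !spin_swap tpermL tpermR.
have -> : 2 * (p mu - p nu) = (p mu - p nu) + (p mu - p nu) by ring.
rewrite {1}gap gap_swapped -big_split /=.
by apply: eq_bigr => s _; rewrite /T; ring.
Qed.

(* summing the term bounds against the Gibbs weights gives
   2 beta d^2 <= 2 (1 - tanh^2 a) beta |d| tanh (beta |d|) *)
Lemma gap_bound : 0 < beta -> mu != nu ->
  (p mu - p nu) ^+ 2 <=
    `|p mu - p nu| * ((1 - tanhR a ^+ 2) * tanhR (beta * `|p mu - p nu|)).
Proof.
move=> b0 mn; set d := p mu - p nu.
set K := beta * `|d| * tanhR (beta * `|d|).
have : 2 * beta * d ^+ 2 <= \sum_s gibbs a s * ((spin s mu - spin s nu) ^+ 2 * K).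
  have -> : 2 * beta * d ^+ 2 = beta * d * (2 * d) by ring.
  rewrite [X in _ * X]gap_identity mulr_sumr; apply: ler_sum => s _.
  rewrite mulrCA; apply: ler_wpM2l; first exact: gibbs_ge0.
  have hs := local_field_swap p s mn; rewrite -/d in hs.
  have -> : beta * local_field p (swap s) =
      beta * local_field p s - (spin s mu - spin s nu) * beta * d.
    by rewrite -mulrA [_ * d]mulrC mulrA -hs; ring.
  apply: le_trans _ (spin_gap_term _ d _ s b0).
  by rewrite le_eqVlt; apply/orP; left; apply/eqP; ring.
under eq_bigr do rewrite mulrA.
rewrite -mulr_suml gibbs_spin_gap // => bound.
rewrite -(ler_pM2l (_ : 0 < 2 * beta)) ?mulr_gt0 //; apply: (le_trans bound).
by rewrite /K le_eqVlt; apply/orP; left; apply/eqP; ring.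
Qed.
End SelfConsistency.
End Swap.

Theorem mainTheorem3 (R : realType) (beta : R) (M : nat) (p : 'I_M -> R) :
  0 < beta -> (1 <= M)%N ->
  (forall mu : 'I_M,
     p mu = avg_s beta (fun s => spin s mu *
              tanhR (beta * \sum_(nu < M) spin s nu * p nu))) ->
  forall mu nu : 'I_M, p mu = p nu.
Proof.
move=> beta_gt0 _ p_avg mu nu.
have [->//|mn] := eqVneq mu nu.
have p_fix : forall k, p k = \sum_s gibbs (beta * m0 beta) s *
    (spin s k * tanhR (beta * local_field p s)) := p_avg.
apply: subr0_eq.
have := gap_bound mu nu p_fix beta_gt0 mn; set d := p mu - p nu.
have [//|d_neq0] := eqVneq d 0.
have d_gt0 : 0 < `|d| by rewrite normr_gt0.
rewrite -real_normK ?num_real // expr2 ler_pM2l // => d_le.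
by have := gap_contraction beta_gt0 d_gt0; rewrite ltNge d_le.
Qed.
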